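(* For all integers $s\geq 1$ and $n\geq 2$, \begin{align*} a_{8s3^{n}} &\equiv 3^{n+3}\cdot 2s+3^{n+2}\cdot 2s \pmod{3^{n+4}},\\ a_{8s3^{n}+1} &\equiv 3^{n+2}\cdot 5s+3^{n+1}\cdot s+1 \pmod{3^{n+4}},\\ a_{8s3^{n}+2} &\equiv 3^{n+3}\cdot 2s+3^{n+2}\cdot 5s+1 \pmod{3^{n+4}}. \end{align*}
   Context: The Narayana sequence $(a_n)_{n\geq 0}$ is defined by $a_0=0$, $a_1=a_2=1$ and $a_n=a_{n-1}+a_{n-3}$ for all $n\geq 3$. *)

From mathcomp Require Import all_boot.
Set Implicit Arguments. Unset Strict Implicit. Unset Printing Implicit Defensive.

(* Narayana sequence: a_0 = 0, a_1 = a_2 = 1, a_n = a_(n-1) + a_(n-3).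
   narayana_triple n = (a_n, a_(n+1), a_(n+2)). *)
Fixpoint narayana_triple (n : nat) : nat * nat * nat :=
  match n with
  | 0 => (0, 1, 1)
  | k.+1 => let: (x, y, z) := narayana_triple k in (y, z, z + x)
  end.

Definition narayana (n : nat) : nat := (narayana_triple n).1.1.

Lemma narayana0 : narayana 0 = 0. Proof. by []. Qed.
Lemma narayana1 : narayana 1 = 1. Proof. by []. Qed.
Lemma narayana2 : narayana 2 = 1. Proof. by []. Qed.
Lemma narayanaS3 n : narayana n.+3 = narayana n.+2 + narayana n.
Proof.
rewrite /narayana /=; case: (narayana_triple n) => [[x y] z] //=.
Qed.

(* Let M be the companion matrix of x^3 - x^2 - 1, so that M^k (0,1,1)^T = (a_k, a_(k+1), a_(k+2))^T.
   A direct computation gives M^72 = 1 + 27 B (mod 3^6) for an explicit integer matrix B.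
   If A = 1 + q b (mod q p) with p | q, then A^s = 1 + s q b (mod q p); if moreover 3 | q, the
   binomial expansion of (1 + x)^3 gives A^3 = 1 + 3 q b (mod 3 q p).  Cubing m times and then
   taking the s-th power yields M^(8 s 3^(m+2)) = 1 + 27 3^m s B (mod 3^(m+6)), and applying
   this to (0,1,1)^T, where B (0,1,1)^T = (24, 43, 33)^T, gives the three congruences. *)

From Stdlib Require Import ZArith.
From mathcomp Require Import all_boot all_algebra ssrZ zify.
Set Implicit Arguments. Unset Strict Implicit. Unset Printing Implicit Defensive.
Import GRing.Theory.
Local Open Scope ring_scope.

Section NatDivisibility.

Variable V : nmodType.
Implicit Types (x y : V) (d m n : nat).

Definition dvdnr d x := exists y, x = y *+ d.

Lemma dvdnr_mulrn d x : dvdnr d (x *+ d).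
Proof. by exists x. Qed.

Lemma dvdnrD d x y : dvdnr d x -> dvdnr d y -> dvdnr d (x + y).
Proof. by move=> [x' ->] [y' ->]; exists (x' + y'); rewrite mulrnDl. Qed.

Lemma dvdnrMn d k x : dvdnr d x -> dvdnr (d * k) (x *+ k).
Proof. by move=> [x' ->]; exists x'; rewrite mulrnA. Qed.

Lemma dvdnr_trans m n x : (m %| n)%N -> dvdnr n x -> dvdnr m x.
Proof. by move=> /dvdnP[k ->] [x' ->]; exists (x' *+ k); rewrite mulrnA. Qed.

End NatDivisibility.

Section NatCongruence.

Variable V : zmodType.
Implicit Types (x y : V) (d : nat).

Definition eqmodr d x y := dvdnr d (x - y).

Lemma eqmodrr d x : eqmodr d x x.
Proof. by exists 0; rewrite subrr mul0rn. Qed.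

Lemma eqmodr0 d x : eqmodr d x 0 = dvdnr d x.
Proof. by rewrite /eqmodr subr0. Qed.

Lemma eqmodrD d x1 x2 y1 y2 :
  eqmodr d x1 y1 -> eqmodr d x2 y2 -> eqmodr d (x1 + x2) (y1 + y2).
Proof. by move=> h1 h2; rewrite /eqmodr opprD addrACA; apply: dvdnrD. Qed.

Lemma eqmodrMn d k x y : eqmodr d x y -> eqmodr (d * k) (x *+ k) (y *+ k).
Proof. by rewrite /eqmodr -mulrnBl; apply: dvdnrMn. Qed.

Lemma dvdnr_eqmodr q p x b : eqmodr (q * p) x (b *+ q) -> dvdnr q x.
Proof.
move=> /(dvdnr_trans (dvdn_mulr p (dvdnn q))) hx.
by rewrite -(subrK (b *+ q) x); apply: dvdnrD hx (dvdnr_mulrn _ _).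
Qed.

End NatCongruence.

Section RingCongruence.

Variable R : pzRingType.
Implicit Types (x y A b : R) (m n : nat).

Lemma dvdnrM m n x y : dvdnr m x -> dvdnr n y -> dvdnr (m * n) (x * y).
Proof.
by move=> [x' ->] [y' ->]; exists (x' * y'); rewrite mulrnAl mulrnAr -mulrnA mulnC.
Qed.

Lemma eqmodr_sub1 d A y : eqmodr d A (1 + y) = eqmodr d (A - 1) y.
Proof. by rewrite /eqmodr opprD addrA. Qed.

Lemma exprD1n3 x : (x + 1) ^+ 3 = x ^+ 3 + x ^+ 2 *+ 3 + x *+ 3 + 1.
Proof.
rewrite exprD1n !big_ord_recr big_ord0 /= add0r expr0 expr1 bin0 bin1 binn !mulr1n.
have -> : 'C(3, 2) = 3%N by [].
by rewrite addrC [_ + x ^+ 2 *+ 3]addrC [1 + _]addrC !addrA.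
Qed.

Section Modulus.

Variables p q : nat.
Hypothesis p_dvd_q : (p %| q)%N.

Lemma eqmodr_mul_one_add A1 A2 b1 b2 :
  eqmodr (q * p) A1 (1 + b1 *+ q) -> eqmodr (q * p) A2 (1 + b2 *+ q) ->
  eqmodr (q * p) (A1 * A2) (1 + (b1 + b2) *+ q).
Proof.
rewrite !eqmodr_sub1 -(subrK 1 A1) -(subrK 1 A2) !addrK.
move: (A1 - 1) (A2 - 1) => x1 x2 h1 h2.
rewrite mulrDl !mulrDr !mulr1 mul1r addrA addrK mulrnDl -[b1 *+ q]add0r.
have x1x2 := dvdnrM (dvdnr_eqmodr h1) (dvdnr_eqmodr h2).
apply: eqmodrD h2; apply: eqmodrD h1; rewrite eqmodr0.
exact: dvdnr_trans (dvdn_mul (dvdnn q) p_dvd_q) x1x2.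
Qed.

Lemma eqmodr_expr_one_add A b s :
  eqmodr (q * p) A (1 + b *+ q) -> eqmodr (q * p) (A ^+ s) (1 + b *+ s *+ q).
Proof.
move=> hA; elim: s => [|s IHs].
  by rewrite expr0 mulr0n mul0rn addr0; apply: eqmodrr.
by rewrite exprS mulrS; apply: eqmodr_mul_one_add.
Qed.

Lemma eqmodr_expr3_one_add A b : (3 %| q)%N ->
  eqmodr (q * p) A (1 + b *+ q) -> eqmodr (q * 3 * p) (A ^+ 3) (1 + b *+ (q * 3)).
Proof.
move=> three_dvd_q; rewrite !eqmodr_sub1 -(subrK 1 A) addrK; move: (A - 1) => x hx.
have xq := dvdnr_eqmodr hx.
have x2 : dvdnr (q * 3 * p) (x ^+ 2 *+ 3).
  rewrite mulnAC expr2; apply: dvdnr_trans (dvdnrMn 3 (dvdnrM xq xq)).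
  exact: dvdn_mul (dvdn_mul (dvdnn q) p_dvd_q) (dvdnn 3).
have x3 : dvdnr (q * 3 * p) (x ^+ 3).
  rewrite -mulnA exprS expr2; apply: dvdnr_trans (dvdnrM xq (dvdnrM xq xq)).
  exact: dvdn_mul (dvdnn q) (dvdn_mul three_dvd_q p_dvd_q).
rewrite exprD1n3 addrK mulrnA.
have -> : b *+ q *+ 3 = 0 + 0 + b *+ q *+ 3 by rewrite !add0r.
apply: eqmodrD; last by rewrite mulnAC; apply: eqmodrMn.
by apply: eqmodrD; rewrite eqmodr0.
Qed.

End Modulus.

Lemma eqmodr_expr3n_one_add p q A b m : (3 %| q)%N -> (p %| q)%N ->
  eqmodr (q * p) A (1 + b *+ q) ->
  eqmodr (q * 3 ^ m * p) (A ^+ (3 ^ m)) (1 + b *+ (q * 3 ^ m)).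
Proof.
move=> three_dvd_q p_dvd_q hA; elim: m => [|m IHm]; first by rewrite expn0 !muln1 expr1.
rewrite expnSr exprM !mulnA.
by apply: eqmodr_expr3_one_add IHm; apply: dvdn_mulr.
Qed.

End RingCongruence.

Section NarayanaMatrix.

Variable R : pzSemiRingType.

(* [(narayana k)%:R] would be evaluated through unary [nat]; this recursion stays in [R],
   so that [vm_compute] evaluates it quickly in [Z]. *)
Fixpoint narayanar_triple k : R * R * R :=
  match k with
  | 0 => (0, 1, 1)
  | k.+1 => let: (x, y, z) := narayanar_triple k in (y, z, z + x)
  end.

Definition narayanar k : R := (narayanar_triple k).1.1.

Lemma narayanarS3 k : narayanar k.+3 = narayanar k.+2 + narayanar k.
Proof. by rewrite /narayanar /=; case: (narayanar_triple k) => [[x y] z]. Qed.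

Lemma narayanarE k : narayanar k = (narayana k)%:R.
Proof.
rewrite /narayanar; suff -> : narayanar_triple k
  = ((narayana k)%:R, (narayana k.+1)%:R, (narayana k.+2)%:R) by [].
elim: k => [|k /= ->] //.
by rewrite narayanaS3 natrD.
Qed.

Definition mx3 (a b c d e f g h i : R) : 'M[R]_3 :=
  \matrix_(r, s) nth 0 (nth [::] [:: [:: a; b; c]; [:: d; e; f]; [:: g; h; i]] r) s.

Definition col3 (x y z : R) : 'cV[R]_3 := \col_r nth 0 [:: x; y; z] r.

Lemma mx3_mulcol a b c d e f g h i x y z :
  mx3 a b c d e f g h i *m col3 x y z
  = col3 (a * x + b * y + c * z) (d * x + e * y + f * z) (g * x + h * y + i * z).
Proof.
apply/matrixP => r k; rewrite !mxE !big_ord_recr big_ord0 /= !mxE add0r.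
by case: r => [[|[|[|r]]] Hr].
Qed.

Lemma mx3_mul a b c d e f g h i a' b' c' d' e' f' g' h' i' :
  mx3 a b c d e f g h i * mx3 a' b' c' d' e' f' g' h' i'
  = mx3 (a * a' + b * d' + c * g') (a * b' + b * e' + c * h') (a * c' + b * f' + c * i')
        (d * a' + e * d' + f * g') (d * b' + e * e' + f * h') (d * c' + e * f' + f * i')
        (g * a' + h * d' + i * g') (g * b' + h * e' + i * h') (g * c' + h * f' + i * i').
Proof.
apply/matrixP => r k; rewrite -mulmxE !mxE !big_ord_recr big_ord0 /= !mxE add0r.
by case: r => [[|[|[|r]]] Hr]; case: k => [[|[|[|k]]] Hk].
Qed.

Lemma col3D x y z x' y' z' : col3 x y z + col3 x' y' z' = col3 (x + x') (y + y') (z + z').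
Proof. by apply/matrixP => r k; rewrite !mxE; case: r => [[|[|[|r]]] Hr]. Qed.

Lemma col3Mn x y z k : col3 x y z *+ k = col3 (x *+ k) (y *+ k) (z *+ k).
Proof. by apply/matrixP => r c; rewrite mulmxnE !mxE; case: r => [[|[|[|r]]] Hr]. Qed.

Definition narayana_mx : 'M[R]_3 := mx3 0 1 0 0 0 1 1 0 1.

Lemma narayana_mx_col k :
  narayana_mx ^+ k *m col3 0 1 1 = col3 (narayanar k) (narayanar k.+1) (narayanar k.+2).
Proof.
elim: k => [|k IHk]; first by rewrite expr0 mul1mx.
rewrite exprS -mulmxE -mulmxA IHk mx3_mulcol !mul0r !mul1r !addr0 !add0r.
by rewrite narayanarS3 addrC.
Qed.

Lemma narayana_mx_exp k : narayana_mx ^+ k.+3 =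
  mx3 (narayanar k.+1) (narayanar k) (narayanar k.+2)
      (narayanar k.+2) (narayanar k.+1) (narayanar k.+3)
      (narayanar k.+3) (narayanar k.+2) (narayanar k.+4).
Proof.
elim: k => [|k IHk].
  rewrite !exprS expr0 mulr1 !mx3_mul /narayanar /=.
  by rewrite !(mul0r, mul1r, addr0, add0r).
rewrite exprS IHk mx3_mul !(mul0r, mul1r, addr0, add0r).
by congr mx3; rewrite [in RHS]narayanarS3 addrC.
Qed.

End NarayanaMatrix.

Lemma dvdnr_mx (V : nmodType) m n d (X : 'M[V]_(m, n)) :
  (forall i j, dvdnr d (X i j)) -> dvdnr d X.
Proof.
move=> hX; have hX' i j : exists y, X i j == y *+ d.
  by have [y ->] := hX i j; exists y.
exists (\matrix_(i, j) xchoose (hX' i j)); apply/matrixP => i j.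
by rewrite mulmxnE mxE; apply/eqP; exact: (xchooseP (hX' i j)).
Qed.

Lemma mulmxnl (R : pzSemiRingType) m n p k (A : 'M[R]_(m, n)) (B : 'M[R]_(n, p)) :
  A *+ k *m B = (A *m B) *+ k.
Proof. exact: (raddfMn (mulmxr B)). Qed.

Lemma eqmodr_mulmx (R : pzRingType) m n p d (A A' : 'M[R]_(m, n)) (B : 'M[R]_(n, p)) :
  eqmodr d A A' -> eqmodr d (A *m B) (A' *m B).
Proof. by rewrite /eqmodr -mulmxBl => -[Y ->]; exists (Y *m B); rewrite mulmxnl. Qed.

Lemma eqmodr_mx (V : zmodType) m n d (A A' : 'M[V]_(m, n)) i j :
  eqmodr d A A' -> eqmodr d (A i j) (A' i j).
Proof. by move=> [Y hY]; exists (Y i j); rewrite -mulmxnE -hY !mxE. Qed.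

Lemma eqmodr_col3 (R : pzRingType) d (x y z x' y' z' : R) :
  eqmodr d (col3 x y z) (col3 x' y' z') ->
  [/\ eqmodr d x x', eqmodr d y y' & eqmodr d z z'].
Proof.
move=> h; split.
- by have := eqmodr_mx 0 0 h; rewrite !mxE.
- by have := eqmodr_mx 1 0 h; rewrite !mxE.
- by have := eqmodr_mx 2 0 h; rewrite !mxE.
Qed.

Lemma dvdnrZ d (z : Z) : Z.modulo z (Z.of_nat d) = 0 -> dvdnr d z.
Proof.
by move=> hz; exists (Z.div z (Z.of_nat d)); move: hz; Z.div_mod_to_equations; lia.
Qed.

Lemma eqmodr_natrZ x y d : eqmodr d (x%:R : Z) y%:R -> x = y %[mod d].
Proof.
move=> [w hw]; have [w_ge0 | w_lt0] := Z.le_gt_cases 0 w.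
  have -> : x = (Z.to_nat w * d + y)%N by lia.
  by rewrite modnMDl.
have -> : y = (Z.to_nat (- w) * d + x)%N by lia.
by rewrite modnMDl.
Qed.

Definition narayana_B : 'M[Z]_3 := mx3 19 7 17 17 19 24 24 17 16.

Lemma narayana_mx72 : eqmodr 729 (narayana_mx _ ^+ 72) (1 + narayana_B *+ 27).
Proof.
apply: dvdnr_mx => i j; apply: dvdnrZ.
rewrite narayana_mx_exp !mxE.
by case: i => [[|[|[|//]]] Hi]; case: j => [[|[|[|//]]] Hj]; vm_compute.
Qed.

Lemma narayana_B_col : narayana_B *m col3 0 1 1 = col3 24 43 33.
Proof. by rewrite mx3_mulcol; congr col3; vm_compute. Qed.

Local Close Scope ring_scope.

Theorem proposition3p4 (s n : nat) (hs : 1 <= s) (hn : 2 <= n) :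
  [/\ narayana (8 * s * 3 ^ n)
        = 3 ^ n.+3 * 2 * s + 3 ^ n.+2 * 2 * s %[mod 3 ^ n.+4],
      narayana (8 * s * 3 ^ n).+1
        = 3 ^ n.+2 * 5 * s + 3 ^ n.+1 * s + 1 %[mod 3 ^ n.+4] &
      narayana (8 * s * 3 ^ n).+2
        = 3 ^ n.+3 * 2 * s + 3 ^ n.+2 * 5 * s + 1 %[mod 3 ^ n.+4]].
Proof.
case: n hn => [|[|m]] // _.
have hM := eqmodr_expr_one_add (dvdn_mulr (3 ^ m) (dvdnn 27)) s
  (eqmodr_expr3n_one_add (p := 27) (q := 27) m isT isT narayana_mx72).
have hK : 72 * (3 ^ m * s) = 8 * s * 3 ^ m.+2 by rewrite !expnS; lia.
rewrite -!exprM hK in hM.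
have := eqmodr_mulmx (col3 0 1 1) hM.
rewrite narayana_mx_col mulmxDl mul1mx !mulmxnl narayana_B_col !col3Mn col3D.
move=> /eqmodr_col3[]; rewrite !narayanarE => -[w0 h0] [w1 h1] [w2 h2].
rewrite !expnS in h0 h1 h2 *; move: (3 ^ m) h0 h1 h2 => T h0 h1 h2.
(* 43 * 27 = 16 * 27 + 27 * 27, so the middle entry carries an extra multiple s of 3^(m+6). *)
split; apply: eqmodr_natrZ; [exists w0 | exists (w1 + s%:R)%R | exists w2]; lia.
Qed.
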